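(* Let $(V,\rho)$ be an $n$-dimensional irreducible reflection representation of $(W,S)$, $S=\{s_1,\dots,s_k\}$, over a field $\mathbb{F}$ of characteristic $0$, with chosen reflection vectors $\alpha_1,\dots,\alpha_k$, and suppose $I=[n]\subseteq[k]$ is such that $G_I$ is weakly connected and $\{\alpha_1,\dots,\alpha_n\}$ is a basis of $V$. Let $0\le d\le n$ and let $\varphi$ be a $W$-module endomorphism of $\bigwedge^dV$. Then for each $d$-element subset $J=\{i_1,\dots,i_d\}\subseteq I$ there is a scalar $\gamma_J\in\mathbb{F}$ with $\varphi(\alpha_{i_1}\wedge\cdots\wedge\alpha_{i_d})=\gamma_J\,\alpha_{i_1}\wedge\cdots\wedge\alpha_{i_d}$; and if $J'\subseteq I$ is obtained from $J$ by a move in $G_I$, then $\gamma_J=\gamma_{J'}$.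
   Context: A linear map $s:V\to V$ is a (generalized) reflection if it is diagonalizable and $\operatorname{rank}(s-\operatorname{Id}_V)=1$; a reflection vector of $s$ is a nonzero vector in $\operatorname{Im}(s-\operatorname{Id}_V)$. A reflection representation of $(W,S)$ is a finite-dimensional representation with each $\rho(s_i)$ a reflection; $\alpha_i$ is a chosen reflection vector of $s_i$. $W$ acts diagonally on $\bigwedge^dV$. For $I\subseteq[k]$, the digraph $G_I$ has vertex set $I$ and an arrow $i\to j$ ($i\neq j$) iff $s_j\cdot\alpha_i\neq\alpha_i$; weakly connected means connected after forgetting directions. For subsets $J,J'$ of the vertex set, $J'$ is obtained from $J$ by a move if there exist $i\in J$, $j\in J'$ such that $J\setminus\{i\}=J'\setminus\{j\}$ and either $i\to j$ or $j\to i$ is an arrow. *)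

From HB Require Import structures.
From mathcomp Require Import all_boot all_order all_algebra.
Set Implicit Arguments. Unset Strict Implicit. Unset Printing Implicit Defensive.
Import Order.TTheory GRing.Theory Num.Theory.
Local Open Scope ring_scope.

(* V is modelled as row vectors 'rV[F]_n; a matrix A acts by v |-> v *m A. *)

(* d-element subsets of [n] index the basis of /\^d V. *)
Notation dsub n d := {T : {set 'I_n} | #|T| == d}.
Notation ext F n d := {ffun dsub n d -> F^o}.

Section Defs.
Variable F : fieldType.

Definition is_reflection n (A : 'M[F]_n) : Prop :=
  diagonalizable A /\ \rank (A - 1%:M) = 1%N.

Definition is_reflection_vector n (A : 'M[F]_n) (alpha : 'rV[F]_n) : Prop :=
  alpha != 0 /\ (alpha <= A - 1%:M)%MS.

(* rho(W): matrices that are products of the rho(s_i) and their inverses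
   (W is generated by S). *)
Definition in_rhoW n k (s : 'I_k -> 'M[F]_n) (A : 'M[F]_n) : Prop :=
  exists w : seq ('I_k * bool),
    A = \prod_(p <- w) (if p.2 then s p.1 else invmx (s p.1)).

Definition irreducible_rep n k (s : 'I_k -> 'M[F]_n) : Prop :=
  (0 < n)%N /\
  forall U : 'M[F]_n, (forall A, in_rhoW s A -> (U *m A <= U)%MS) ->
    \rank U = 0%N \/ \rank U = n.


(* Coordinate of v_0 /\ ... /\ v_{d-1} on e_T: the d x d minor with columns T. *)
Definition wedge_coord n d (vs : 'I_d -> 'rV[F]_n) (T : {set 'I_n}) : F :=
  \det (\matrix_(i < d, j < d) nth 0 [seq vs i 0 c | c <- enum T] j).

Definition wedge n d (vs : 'I_d -> 'rV[F]_n) : ext F n d :=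
  [ffun T => wedge_coord vs (val T)].

(* Induced (diagonal) action of A on /\^d V:
   e_{t1} /\ ... /\ e_{td}  |->  (e_{t1} A) /\ ... /\ (e_{td} A). *)
Definition ext_act n d (A : 'M[F]_n) (x : ext F n d) : ext F n d :=
  \sum_(T : dsub n d)
     x T *: wedge (fun i : 'I_d => \row_c nth 0 [seq A r c | r <- enum (val T)] i).

Definition wedge_set n k d (alpha : 'I_k -> 'rV[F]_n) (J : {set 'I_k}) : ext F n d :=
  wedge (fun i : 'I_d => nth 0 [seq alpha j | j <- enum J] i).

Definition arrow n k (s : 'I_k -> 'M[F]_n) (alpha : 'I_k -> 'rV[F]_n) (i j : 'I_k) : bool :=
  (i != j) && (alpha i *m s j != alpha i).

Definition weakly_connected n k (s : 'I_k -> 'M[F]_n) (alpha : 'I_k -> 'rV[F]_n)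
    (I : {set 'I_k}) : Prop :=
  forall i j, i \in I -> j \in I ->
    connect [rel a b | [&& a \in I, b \in I & arrow s alpha a b || arrow s alpha b a]] i j.

Definition move n k (s : 'I_k -> 'M[F]_n) (alpha : 'I_k -> 'rV[F]_n)
    (I J J' : {set 'I_k}) : Prop :=
  exists i j, [/\ i \in J, j \in J', J :\ i = J' :\ j,
                  (i \in I) && (j \in I) &
                  arrow s alpha i j || arrow s alpha j i].

End Defs.

From HB Require Import structures.
From mathcomp Require Import all_boot all_order all_algebra.
From mathcomp Require Import perm.
Import Order.TTheory GRing.Theory Num.Theory.
Local Open Scope ring_scope.
Set Implicit Arguments. Unset Strict Implicit. Unset Printing Implicit Defensive.

(* Write V in the basis alpha_1, ..., alpha_n. There s_m acts by
   v |-> v + f_m(v) e_m with f_m(e_m) <> 0, since a diagonalizable reflection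
   is not unipotent; so on /\^d V it fixes the e_U-coordinate whenever
   m \notin U and it scales e_T by its eigenvalue, which is <> 1, whenever
   m \in T. An operator phi commuting with s_m therefore has no e_U-component
   in phi(e_T) for U <> T: phi is diagonal in the basis (e_T). If
   T' = T - i + j with alpha_i s_j <> alpha_i, then s_j e_T has a nonzero
   e_T'-coordinate, and comparing that coordinate in
   phi (s_j e_T) = s_j phi(e_T) gives gamma_T = gamma_T'. *)

Section Determinants.
Variable R : comPzRingType.

Lemma det_row_eq0 d (D : 'M[R]_d) a : row a D = 0 -> \det D = 0.
Proof.
move=> Da0; rewrite (expand_det_row D a) big1 // => b _.
by have /rowP/(_ b) := Da0; rewrite !mxE => ->; rewrite mul0r.
Qed.

(* Only the permutation 1 contributes: a moved point not sent to [p] meets a zero entry. *)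
Lemma det_id_except_col d (D : 'M[R]_d) (p : 'I_d) :
  (forall a b, b != p -> D a b = (a == b)%:R) -> \det D = D p p.
Proof.
move=> Did; rewrite /determinant (bigD1 (1%g : 'S_d)) //=.
rewrite [X in _ + X]big1 ?addr0 => [|s s1].
  rewrite odd_perm1 mul1r (bigD1 p) //= big1 ?mulr1 ?perm1 // => a ap.
  by rewrite perm1 Did ?eqxx.
have [a sa ap] : exists2 a, s a != a & s a != p.
  have [a sa] : exists a, s a != a.
    apply/existsP; apply: contraR s1 => /existsPn sfix; apply/eqP/permP => a.
    by rewrite perm1; apply/eqP/negbNE/sfix.
  case: (eqVneq (s a) p) => sap; last by exists a.
  exists (s a); first by rewrite (inj_eq perm_inj).
  by rewrite sap -sap (inj_eq perm_inj).
by rewrite (bigD1 a) //= Did // eq_sym (negPf sa) mul0r mulr0.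
Qed.

End Determinants.

Lemma det_neq0_pivots (F : fieldType) d (D : 'M[F]_d) (a0 p : 'I_d) :
  (forall a, a != a0 -> exists b, D a b != 0 /\ forall a', a' != a -> D a' b = 0) ->
  D a0 p != 0 -> \det D != 0.
Proof.
move=> pivot Da0p; apply/negP => /det0P [v /negP nv0 vD]; apply: nv0.
have vDb b : \sum_a v 0 a * D a b = 0.
  by have /rowP/(_ b) := vD; rewrite !mxE.
have va a : a != a0 -> v 0 a = 0.
  move=> aa0; have [b [Dab Db]] := pivot a aa0.
  have := vDb b; rewrite (bigD1 a) //= big1 ?addr0 => [|a' a'a]; last by rewrite Db ?mulr0.
  by move/eqP; rewrite mulf_eq0 (negPf Dab) orbF => /eqP.
have := vDb p; rewrite (bigD1 a0) //= big1 ?addr0 => [|a aa0]; last by rewrite va ?mul0r.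
move/eqP; rewrite mulf_eq0 (negPf Da0p) orbF => /eqP va0.
by apply/eqP/rowP => a; rewrite mxE; case: (eqVneq a a0) => [->|/va].
Qed.

Section DsubEnum.
Variables n d : nat.
Implicit Types (T U : dsub n d) (a : 'I_d).

Lemma dsub_card T : #|val T| = d.
Proof. exact/eqP/(valP T). Qed.

Definition dsub_enum T a : 'I_n :=
  enum_val (cast_ord (esym (dsub_card T)) a).

Lemma dsub_enumP T a : dsub_enum T a \in val T.
Proof. exact: enum_valP. Qed.

Lemma dsub_enum_inj T : injective (dsub_enum T).
Proof. by move=> a b /enum_val_inj /cast_ord_inj. Qed.

Lemma dsub_enum_onto T t : t \in val T -> exists a, dsub_enum T a = t.
Proof.
move=> tT; exists (cast_ord (dsub_card T) (enum_rank_in tT t)).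
by rewrite /dsub_enum cast_ordK enum_rankK_in.
Qed.

Lemma nth_enum_dsub T x0 a : nth x0 (enum (val T)) a = dsub_enum T a.
Proof. by rewrite /dsub_enum (enum_val_nth x0). Qed.

Lemma dsub_neq_exists T U : T != U -> exists2 t, t \in val T & t \notin val U.
Proof.
move=> TU; apply/subsetPn; apply: contra TU => sTU.
by apply/eqP/val_inj/eqP; rewrite eqEcard sTU !dsub_card /=.
Qed.

Lemma ffun_dsub_perm_inj :
  injective (fun p : dsub n d * 'S_d => [ffun a => dsub_enum p.1 (p.2 a)]).
Proof.
have imE (p : dsub n d * 'S_d) : [set dsub_enum p.1 (p.2 a) | a : 'I_d] = val p.1.
  apply/eqP; rewrite eqEcard card_imset; last first.
    by move=> a b /dsub_enum_inj /perm_inj.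
  rewrite card_ord dsub_card leqnn andbT.
  by apply/subsetP => _ /imsetP [a _ ->]; exact: dsub_enumP.
move=> [T s] [T' s'] /ffunP E.
have ET : T = T'.
  apply: val_inj; rewrite -(imE (T, s)) -(imE (T', s')).
  by apply: eq_imset => a; have := E a; rewrite !ffunE.
subst T'; congr (_, _); apply/permP => a.
by have := E a; rewrite !ffunE /= => /dsub_enum_inj.
Qed.

Lemma injective_ffun_dsub_perm (f : {ffun 'I_d -> 'I_n}) : injective f ->
  exists p : dsub n d * 'S_d, f = [ffun a => dsub_enum p.1 (p.2 a)].
Proof.
move=> injf; have cT : #|[set f a | a : 'I_d]| == d by rewrite card_imset ?card_ord.
pose T : dsub n d := exist _ [set f a | a : 'I_d] cT.
have idx a : exists b, dsub_enum T b == f a.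
  have fT : f a \in val T by apply/imsetP; exists a.
  by have [b <-] := dsub_enum_onto fT; exists b.
pose s a := xchoose (idx a).
have sE a : dsub_enum T (s a) = f a := eqP (xchooseP (idx a)).
have s_inj : injective s by move=> a b E; apply: injf; rewrite -!sE E.
by exists (T, perm s_inj); apply/ffunP => a; rewrite !ffunE permE sE.
Qed.

End DsubEnum.

Section CauchyBinet.
Variables (R : comPzRingType) (n d : nat).
Local Notation colsub g := (mxsub id g).
Local Notation rowsub f := (mxsub f id).

Lemma det_mulmx_sum_ffun (X : 'M[R]_(d, n)) (B : 'M[R]_(n, d)) :
  \det (X *m B) =
  \sum_(f : {ffun 'I_d -> 'I_n}) (\prod_i X i (f i)) * \det (rowsub f B).
Proof.
transitivity (\sum_(s : 'S_d) \sum_(f : {ffun 'I_d -> 'I_n})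
    (-1) ^+ s * \prod_i (X i (f i) * B (f i) (s i))).
  apply: eq_bigr => s _; rewrite -big_distrr /=; congr (_ * _).
  rewrite -(bigA_distr_bigA (fun i j => X i j * B j (s i))) /=.
  by apply: eq_bigr => i _; rewrite mxE.
rewrite exchange_big; apply: eq_bigr => f _.
rewrite big_distrr /=; apply: eq_bigr => s _; rewrite big_split /=.
by rewrite mulrCA; congr (_ * (_ * _)); apply: eq_bigr => i _; rewrite mxE.
Qed.

Lemma det_rowsub_perm (A : 'M[R]_d) (s : 'S_d) :
  \det (rowsub s A) = (-1) ^+ s * \det A.
Proof. by rewrite -row_permEsub row_permE det_mulmx det_perm. Qed.

Lemma cauchy_binet (X : 'M[R]_(d, n)) (B : 'M[R]_(n, d)) :
  \det (X *m B) = \sum_(T : dsub n d)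
    \det (colsub (dsub_enum T) X) * \det (rowsub (dsub_enum T) B).
Proof.
pose h (f : {ffun 'I_d -> 'I_n}) := (\prod_i X i (f i)) * \det (rowsub f B).
pose Phi (p : dsub n d * 'S_d) := [ffun a => dsub_enum p.1 (p.2 a)].
rewrite det_mulmx_sum_ffun (bigID (fun f : {ffun 'I_d -> 'I_n} => injectiveb f)) /=.
rewrite [X in _ + X]big1 ?addr0; last first.
  move=> f /injectivePn [a [b ab fab]].
  by rewrite (determinant_alternate ab) ?mulr0 // => j; rewrite !mxE fab.
rewrite (eq_bigl (mem (Phi @: setT))); last first.
  move=> f; apply/injectiveP/imsetP => [/injective_ffun_dsub_perm [p ->]|[p _ ->]].
    by exists p.
  by move=> a b; rewrite !ffunE => /dsub_enum_inj /perm_inj.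
rewrite big_imset /=; last exact: in2W (@ffun_dsub_perm_inj n d).
transitivity (\sum_T \sum_(s : 'S_d) h (Phi (T, s))).
  by rewrite pair_bigA; apply: eq_big => // -[T s]; rewrite in_setT.
apply: eq_bigr => T _; rewrite [in X in X * _]/determinant big_distrl /=.
apply: eq_bigr => s _.
rewrite /h (_ : rowsub (Phi (T, s)) B = rowsub s (rowsub (dsub_enum T) B)).
  rewrite det_rowsub_perm mulrCA mulrA; congr (_ * _).
  by congr (_ * _); apply: eq_bigr => a _; rewrite !mxE ffunE.
by rewrite -mxsub_comp; apply: eq_mxsub => // a; rewrite ffunE.
Qed.

End CauchyBinet.

Section ExteriorPower.
Variables (F : fieldType) (n d : nat).
Implicit Types (A B : 'M[F]_n) (T U : dsub n d) (x : ext F n d)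
  (vs : 'I_d -> 'rV[F]_n).
Local Notation colsub g := (mxsub id g).

Lemma wedgeE vs U : wedge vs U = \det (colsub (dsub_enum U) (\matrix_a vs a)).
Proof.
rewrite ffunE /wedge_coord; congr (\det _); apply/matrixP => a b.
by rewrite !mxE (nth_map (dsub_enum U b)) ?nth_enum_dsub // -cardE dsub_card.
Qed.

Lemma eq_wedge vs vs' : vs =1 vs' -> wedge vs = wedge vs'.
Proof.
move=> E; apply/ffunP => U; rewrite !wedgeE; congr (\det _).
by apply/matrixP => a b; rewrite !mxE E.
Qed.

Lemma ext_scaleE (k : F) x U : (k *: x) U = k * x U.
Proof. by rewrite ffunE. Qed.

Lemma wedge_mul (G : 'M[F]_d) vs :
  wedge (fun a => \sum_b G a b *: vs b) = \det G *: wedge vs.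
Proof.
apply/ffunP => U; rewrite ext_scaleE !wedgeE -det_mulmx -[G in G *m _]mxsub_id.
rewrite -mxsub_mul; congr (\det _); apply/matrixP => a b.
by rewrite !mxE summxE; apply: eq_bigr => c _; rewrite !mxE.
Qed.

Lemma wedge_rank1 (p : 'I_d) (c : 'I_d -> F) vs :
  wedge (fun a => vs a + c a *: vs p) = (1 + c p) *: wedge vs.
Proof.
pose G : 'M[F]_d := \matrix_(a, b) ((a == b)%:R + (b == p)%:R * c a).
have -> : 1 + c p = \det G.
  rewrite (det_id_except_col (p := p)) => [|a b bp]; first by rewrite !mxE !eqxx mul1r.
  by rewrite mxE (negPf bp) mul0r addr0.
rewrite -wedge_mul; apply: eq_wedge => a.
rewrite (eq_bigr (fun b => (a == b)%:R *: vs b + ((b == p)%:R * c a) *: vs b));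
  last by move=> b _; rewrite mxE scalerDl.
rewrite big_split /= (bigD1 a) //= big1 ?addr0 => [|b ba]; last first.
  by rewrite eq_sym (negPf ba) scale0r.
rewrite (bigD1 p) //= big1 ?addr0 => [|b bp]; last by rewrite (negPf bp) mul0r scale0r.
by rewrite !eqxx !mul1r scale1r.
Qed.

Definition ext_basis T : ext F n d := [ffun U => (U == T)%:R].

Lemma ext_basis_expand x : x = \sum_T x T *: ext_basis T.
Proof.
apply/ffunP => U; rewrite sum_ffunE (bigD1 U) //= big1 ?addr0 => [|T TU].
  by rewrite ext_scaleE ffunE eqxx mulr1.
by rewrite ext_scaleE ffunE eq_sym (negPf TU) mulr0.
Qed.

Lemma wedge_basis T : wedge (fun a => delta_mx 0 (dsub_enum T a)) = ext_basis T.
Proof.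
apply/ffunP => U; rewrite wedgeE ffunE.
have entry a b :
    colsub (dsub_enum U) (\matrix_a delta_mx 0 (dsub_enum T a) : 'M[F]_(d, n)) a b =
    (dsub_enum T a == dsub_enum U b)%:R by rewrite !mxE eq_sym.
case: (eqVneq U T) => [UT|UT]; first subst U.
  rewrite -(det1 _ d); congr (\det _); apply/matrixP => a b.
  by rewrite entry !mxE (inj_eq (@dsub_enum_inj _ _ T)).
have [t tT tU] : exists2 t, t \in val T & t \notin val U.
  by apply: dsub_neq_exists; rewrite eq_sym.
have [a ta] := dsub_enum_onto tT; apply: (det_row_eq0 (a := a)).
apply/rowP => b; rewrite mxE entry mxE ta; case: eqP => // tb.
by move: tU; rewrite tb dsub_enumP.
Qed.

Lemma ext_act_rowsE A x :
  ext_act A x = \sum_T x T *: wedge (fun a => row (dsub_enum T a) A).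
Proof.
apply: eq_bigr => T _; congr (_ *: _); apply: eq_wedge => a; apply/rowP => c.
by rewrite !mxE (nth_map (dsub_enum T a)) ?nth_enum_dsub // -cardE dsub_card.
Qed.

Lemma ext_act_is_linear A : linear (@ext_act F n d A).
Proof.
move=> k x y; rewrite !ext_act_rowsE scaler_sumr -big_split /=.
by apply: eq_bigr => T _; rewrite !ffunE scalerDl scalerA.
Qed.

HB.instance Definition _ A :=
  GRing.isLinear.Build F (ext F n d) (ext F n d) *:%R (@ext_act F n d A)
    (ext_act_is_linear A).

Lemma ext_actE A x U :
  ext_act A x U = \sum_T x T * \det (mxsub (dsub_enum T) (dsub_enum U) A).
Proof.
rewrite ext_act_rowsE sum_ffunE; apply: eq_bigr => T _; rewrite ffunE wedgeE.
by congr (_ * \det _); apply/matrixP => a b; rewrite !mxE.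
Qed.

Lemma ext_act_wedge A vs : ext_act A (wedge vs) = wedge (fun a => vs a *m A).
Proof.
apply/ffunP => U; rewrite ext_actE wedgeE.
have -> : \matrix_a (vs a *m A) = (\matrix_a vs a) *m A.
  by apply/row_matrixP => a; rewrite row_mul !rowK.
rewrite mxsub_mul mxsub_id cauchy_binet; apply: eq_bigr => T _.
by rewrite wedgeE [mxsub _ (dsub_enum U) A]mxsubrc.
Qed.

Lemma ext_act_basis A T :
  ext_act A (ext_basis T) = wedge (fun a => row (dsub_enum T a) A).
Proof. by rewrite -wedge_basis ext_act_wedge; apply: eq_wedge => a; rewrite rowE. Qed.

Lemma ext_actM A B x : ext_act B (ext_act A x) = ext_act (A *m B) x.
Proof.
rewrite [ext_act A x]ext_act_rowsE linear_sum ext_act_rowsE; apply: eq_bigr => T _.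
rewrite linearZ /= ext_act_wedge; congr (_ *: _); apply: eq_wedge => a.
by rewrite row_mul.
Qed.

Lemma ext_act1 x : ext_act 1%:M x = x.
Proof.
rewrite ext_act_rowsE [RHS]ext_basis_expand; apply: eq_bigr => T _.
by rewrite -wedge_basis; congr (_ *: _); apply: eq_wedge => a; rewrite row1.
Qed.

Lemma ext_act_invmxK A x : A \in unitmx -> ext_act A (ext_act (invmx A) x) = x.
Proof. by move=> Au; rewrite ext_actM mulVmx // ext_act1. Qed.

Lemma ext_act_conj A B x : A \in unitmx ->
  ext_act A (ext_act (A *m B *m invmx A) x) = ext_act B (ext_act A x).
Proof. by move=> Au; rewrite !ext_actM mulmxKV. Qed.

Lemma ext_act_conj_invmx A B x : A \in unitmx ->
  ext_act (A *m B *m invmx A) (ext_act (invmx A) x) = ext_act (invmx A) (ext_act B x).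
Proof. by move=> Au; rewrite !ext_actM !mulmxA mulVmx // mul1mx. Qed.

Lemma ext_act_coord_eq A B x U :
  {in val U, forall c, col c A = col c B} -> ext_act A x U = ext_act B x U.
Proof.
move=> AB; rewrite !ext_actE; apply: eq_bigr => T _; congr (_ * \det _).
apply/matrixP => a b; have /colP/(_ (dsub_enum T a)) := AB _ (dsub_enumP U b).
by rewrite !mxE.
Qed.

End ExteriorPower.

Arguments ext_basis {F n d}.

Section CoordinateReflections.
Variables (F : fieldType) (n d : nat) (r : 'I_n -> 'M[F]_n).
Implicit Types (T U : dsub n d) (x : ext F n d).

Hypothesis r_col : forall m a c, c != m -> r m a c = (a == c)%:R.

Lemma ext_act_coord_fixed m x U : m \notin val U -> ext_act (r m) x U = x U.
Proof.
move=> mU; rewrite -[in RHS](ext_act1 x); apply: ext_act_coord_eq => c cU.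
by apply/colP => a; rewrite !mxE r_col //; apply: contraNneq mU => <-.
Qed.

Lemma ext_act_basis_eigen m T :
  m \in val T -> ext_act (r m) (ext_basis T) = r m m m *: ext_basis T.
Proof.
move=> mT; have [p tp] := dsub_enum_onto mT.
pose c a := r m (dsub_enum T a) m - (dsub_enum T a == m)%:R.
have row_rm a : row (dsub_enum T a) (r m) =
    delta_mx 0 (dsub_enum T a) + c a *: delta_mx 0 (dsub_enum T p).
  apply/rowP => b; rewrite !mxE tp /c; case: (eqVneq b m) => [->|bm].
    by rewrite eqxx mulr_natr /= mulr1n eq_sym addrC subrK.
  by rewrite r_col // mulr0 addr0 eq_sym.
rewrite ext_act_basis (eq_wedge row_rm) wedge_rank1 wedge_basis /c tp eqxx.
by rewrite addrC subrK.
Qed.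

Lemma ext_act_exchange_coord_neq0 T T' i j :
  i \in val T -> j \in val T' -> val T :\ i = val T' :\ j -> r j i j != 0 ->
  ext_act (r j) (ext_basis T) T' != 0.
Proof.
move=> iT jT' TT' rij; rewrite ext_act_basis wedgeE.
set D := mxsub _ _ _.
have Dab a b : D a b = r j (dsub_enum T a) (dsub_enum T' b) by rewrite !mxE.
have [a0 ta0] := dsub_enum_onto iT; have [p tp] := dsub_enum_onto jT'.
apply: (det_neq0_pivots (a0 := a0) (p := p)); last by rewrite Dab ta0 tp.
move=> a aa0; have : dsub_enum T a \in val T' :\ j.
  by rewrite -TT' !inE dsub_enumP andbT -ta0 (inj_eq (@dsub_enum_inj _ _ T)).
rewrite !inE => /andP [taj /dsub_enum_onto [b tb]].
exists b; rewrite Dab tb r_col // eqxx oner_neq0; split=> // a' a'a.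
by rewrite Dab tb r_col // (inj_eq (@dsub_enum_inj _ _ T)) (negPf a'a).
Qed.

Hypothesis r_diag : forall m, r m m m != 1.
Variable phi : {linear ext F n d -> ext F n d}.
Hypothesis phi_comm : forall m x, phi (ext_act (r m) x) = ext_act (r m) (phi x).

Definition basis_eigenvalue T := phi (ext_basis T) T.

Lemma phi_basis T : phi (ext_basis T) = basis_eigenvalue T *: ext_basis T.
Proof.
apply/ffunP => U; rewrite ext_scaleE ffunE; case: (eqVneq U T) => [->|UT].
  by rewrite mulr1.
have [m mT mU] : exists2 m, m \in val T & m \notin val U.
  by apply: dsub_neq_exists; rewrite eq_sym.
rewrite mulr0; have := ext_act_coord_fixed (phi (ext_basis T)) mU.
rewrite -phi_comm ext_act_basis_eigen // linearZ ext_scaleE /= => /eqP.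
rewrite -subr_eq0 -[X in _ - X]mul1r -mulrBl mulf_eq0 subr_eq0.
by rewrite (negPf (r_diag m)) => /eqP.
Qed.

Lemma phi_coord x U : phi x U = basis_eigenvalue U * x U.
Proof.
rewrite {1}[x]ext_basis_expand linear_sum sum_ffunE (bigD1 U) //= big1 ?addr0.
  by rewrite linearZ phi_basis /= !ext_scaleE ffunE eqxx mulr1 mulrC.
by move=> T TU; rewrite linearZ phi_basis /= !ext_scaleE ffunE eq_sym (negPf TU) !mulr0.
Qed.

Lemma basis_eigenvalue_exchange T T' i j :
  i \in val T -> j \in val T' -> val T :\ i = val T' :\ j -> r j i j != 0 ->
  basis_eigenvalue T = basis_eigenvalue T'.
Proof.
move=> iT jT' TT' rij; set x := ext_act (r j) (ext_basis T).
have := phi_coord x T'; rewrite /x phi_comm phi_basis linearZ ext_scaleE /= => /eqP.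
rewrite -subr_eq0 -mulrBl mulf_eq0 subr_eq0.
by rewrite (negPf (ext_act_exchange_coord_neq0 iT jT' TT' rij)) orbF => /eqP.
Qed.

End CoordinateReflections.

Section Reflections.
Variables (F : fieldType) (n : nat).

Lemma diagonalizable_unipotent (A : 'M[F]_n) :
  diagonalizable A -> (A - 1%:M) *m (A - 1%:M) = 0 -> A = 1%:M.
Proof.
case=> P Pu /(diagonalizable_forLR Pu) [D ->]; rewrite mxpoly.conjVmx //.
set E := diag_mx (D - const_mx 1).
have conjE : invmx P *m diag_mx D *m P - 1%:M = invmx P *m E *m P.
  by rewrite /E linearB /= diag_const_mx mulmxBr mulmxBl mulmx1 mulVmx.
move=> sq0; apply/eqP; rewrite -subr_eq0 conjE.
suff -> : E = 0 by rewrite mulmx0 mul0mx.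
have EE : E *m E = 0.
  move: sq0; rewrite conjE !mulmxA mulmxK // => sq0.
  have := congr1 (fun M => P *m M *m invmx P) sq0.
  by rewrite mulmx0 mul0mx !mulmxA mulmxV // mul1mx mulmxK.
apply/matrixP => i j; rewrite !mxE.
have /matrixP/(_ i i) := EE; rewrite mul_diag_mx !mxE eqxx mulr1n.
by move/eqP; rewrite mulf_eq0 orbb => /eqP ->; rewrite mul0rn.
Qed.

Variables (A : 'M[F]_n) (alpha : 'rV[F]_n).
Hypotheses (reflA : is_reflection A) (alphaA : is_reflection_vector A alpha).

Lemma reflection_image : (A - 1%:M :=: alpha)%MS.
Proof.
have [[_ rank1] [alpha0 alpha_sub]] := conj reflA alphaA.
apply: eqmx_sym; apply/eqmxP.
by have [_ <-] := mxrank_leqif_eq alpha_sub; rewrite rank1 rank_rV alpha0.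
Qed.

Lemma reflection_action v : exists c, v *m A = v + c *: alpha.
Proof.
have /sub_rVP [c vc] : (v *m (A - 1%:M) <= alpha)%MS.
  by rewrite -reflection_image submxMl.
by exists c; rewrite -vc mulmxBr mulmx1 addrC subrK.
Qed.

Lemma reflection_vector_eigen : exists2 c, c != 1 & alpha *m A = c *: alpha.
Proof.
have [c alphac] := reflection_action alpha.
exists (1 + c); last by rewrite alphac scalerDl scale1r.
have [diagA rank1] := reflA.
rewrite -subr_eq0 addrAC subrr add0r; apply/eqP => c0; move: rank1.
suff -> : A = 1%:M by rewrite subrr mxrank0.
apply: diagonalizable_unipotent => //.
apply/row_matrixP => i; rewrite row0 row_mul.
have [k ->] : exists k, row i (A - 1%:M) = k *: alpha.
  apply/sub_rVP; rewrite -reflection_image; exact: row_sub.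
by rewrite -scalemxAl mulmxBr mulmx1 alphac c0 scale0r addr0 subrr scaler0.
Qed.

End Reflections.

Section WidenOrd.
Variables (n k : nat) (nk : (n <= k)%N).
Local Notation wk := (widen_ord nk).

Lemma widen_ord_inj : injective wk.
Proof. by move=> a b ab; apply/val_inj/(congr1 val ab). Qed.

Lemma sum_widen_ord (V : nmodType) (G : 'I_k -> V) :
  \sum_(i : 'I_k | (i < n)%N) G i = \sum_(m : 'I_n) G (wk m).
Proof.
transitivity (\sum_(i in wk @: [set: 'I_n]) G i).
  apply: eq_bigl => i; apply/idP/imsetP => [lt_in | [m _ ->]]; last exact: ltn_ord m.
  by exists (Ordinal lt_in); last apply: val_inj.
rewrite big_imset /=; last exact: in2W widen_ord_inj.
by apply: eq_bigl => m; rewrite in_setT.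
Qed.

Lemma enum_widen_ord (S : {set 'I_n}) : enum (wk @: S) = map wk (enum S).
Proof.
have sorted_val (p : nat) (A : {set 'I_p}) : sorted ltn (map val (enum A)).
  rewrite -[enum _](eq_filter (mem_enum _)) -(eq_filter (mem_map val_inj _)).
  by rewrite -filter_map (sorted_filter ltn_trans) // unlock val_ord_enum iota_ltn_sorted.
apply: (inj_map val_inj); rewrite -map_comp.
apply: (irr_sorted_eq ltn_trans ltnn); rewrite ?sorted_val //.
move=> x; apply/mapP/mapP => [[i] | [m]]; rewrite mem_enum.
  by move=> /imsetP [m mS ->] ->; exists m; rewrite ?mem_enum.
by move=> mS ->; exists (wk m); rewrite ?mem_enum ?imset_f.
Qed.

Lemma widen_imsetK (A : {set 'I_n}) : wk @^-1: (wk @: A) = A.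
Proof. by apply/setP => m; rewrite inE (mem_imset _ _ widen_ord_inj). Qed.

Lemma dsub_of_widen d (J : {set 'I_k}) : J \subset [set i : 'I_k | (i < n)%N] ->
  #|J| = d -> exists S : dsub n d, J = wk @: val S.
Proof.
move=> JI cJ; have JE : J = wk @: (wk @^-1: J).
  apply/setP => i; apply/idP/imsetP => [iJ | [m + ->]]; last by rewrite inE.
  have lt_in : (i < n)%N by have := subsetP JI i iJ; rewrite inE.
  by exists (Ordinal lt_in); rewrite ?inE (_ : wk _ = i) //; apply: val_inj.
have cS : #|wk @^-1: J| == d.
  by rewrite -cJ [in X in _ == X]JE card_imset //; exact: widen_ord_inj.
by exists (exist _ (wk @^-1: J) cS).
Qed.

Lemma widen_exchange d (S S' : dsub n d) i j :
  i \in wk @: val S -> j \in wk @: val S' -> (wk @: val S) :\ i = (wk @: val S') :\ j ->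
  exists a b, [/\ i = wk a, j = wk b, a \in val S, b \in val S' & val S :\ a = val S' :\ b].
Proof.
move=> /imsetP [a aS ->] /imsetP [b bS' ->] SS'; exists a, b; split=> //.
apply/setP => m; have /setP/(_ (wk m)) := SS'.
by rewrite !inE !(mem_imset _ _ widen_ord_inj) !(inj_eq widen_ord_inj).
Qed.

End WidenOrd.

Lemma card_exchange (T : finType) (A B : {set T}) x y :
  x \in A -> y \in B -> A :\ x = B :\ y -> #|B| = #|A|.
Proof. by move=> xA yB AB; rewrite (cardsD1 x A) (cardsD1 y B) xA yB AB. Qed.

Section RootBasis.
Variables (F : fieldType) (n k : nat) (nk : (n <= k)%N).
Variables (s : 'I_k -> 'M[F]_n) (alpha : 'I_k -> 'rV[F]_n).
Local Notation wk := (widen_ord nk).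

Definition root_mx : 'M[F]_n := \matrix_m alpha (wk m).

Hypothesis alpha_free : forall c : 'I_k -> F,
  \sum_(i : 'I_k | (i < n)%N) c i *: alpha i = 0 ->
  forall i : 'I_k, (i < n)%N -> c i = 0.

Lemma root_mx_unit : root_mx \in unitmx.
Proof.
rewrite unitmxE unitfE; apply/negP => /det0P [v /negP nv0 vM]; apply: nv0.
pose c (i : 'I_k) := oapp (fun m => v 0 m) 0 (insub (val i) : option 'I_n).
have cE m : c (wk m) = v 0 m by rewrite /c /= valK.
have sum0 : \sum_(i : 'I_k | (i < n)%N) c i *: alpha i = 0.
  rewrite sum_widen_ord -[in RHS]vM mulmx_sum_row; apply: eq_bigr => m _.
  by rewrite cE rowK.
by apply/eqP/rowP => m; rewrite mxE -cE (alpha_free sum0 (i := wk m) (ltn_ord m)).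
Qed.

Lemma root_mx_coord m : alpha (wk m) *m invmx root_mx = delta_mx 0 m.
Proof. by rewrite -(rowK (fun m => alpha (wk m))) rowE mulmxK // root_mx_unit. Qed.

Lemma wedge_set_widen d (S : dsub n d) :
  wedge_set d alpha (wk @: val S) = ext_act root_mx (ext_basis S).
Proof.
rewrite -wedge_basis ext_act_wedge /wedge_set enum_widen_ord -map_comp.
apply: eq_wedge => a; rewrite (nth_map (dsub_enum S a)) ?nth_enum_dsub.
  by rewrite -rowE rowK.
by rewrite -cardE dsub_card.
Qed.

Definition root_conj m := root_mx *m s (wk m) *m invmx root_mx.

Lemma root_conjE m a x c :
  alpha (wk a) *m s (wk m) = alpha (wk a) + x *: alpha (wk m) ->
  root_conj m a c = (a == c)%:R + x * (m == c)%:R.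
Proof.
move=> sa; have -> : root_conj m a c = row a (root_conj m) 0 c by rewrite [RHS]mxE.
rewrite !row_mul rowK sa mulmxDl -scalemxAl !root_mx_coord !mxE /=.
by rewrite eq_sym [c == m]eq_sym.
Qed.

Hypotheses (s_refl : forall i, is_reflection (s i))
  (alpha_refl : forall i, is_reflection_vector (s i) (alpha i)).

Lemma root_conj_col m a c : c != m -> root_conj m a c = (a == c)%:R.
Proof.
move=> cm; have [x /root_conjE ->] :=
  reflection_action (s_refl (wk m)) (alpha_refl (wk m)) (alpha (wk a)).
by rewrite [m == c]eq_sym (negPf cm) mulr0 addr0.
Qed.

Lemma root_conj_diag m : root_conj m m m != 1.
Proof.
have [c c1 eig] := reflection_vector_eigen (s_refl (wk m)) (alpha_refl (wk m)).
rewrite (@root_conjE m m (c - 1)) ?eqxx ?mulr1; first by rewrite addrC subrK.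
by rewrite eig scalerBl scale1r addrC subrK.
Qed.

Lemma root_conj_arrow a b : arrow s alpha (wk a) (wk b) -> root_conj b a b != 0.
Proof.
case/andP => ab sab.
have [x sa] := reflection_action (s_refl (wk b)) (alpha_refl (wk b)) (alpha (wk a)).
rewrite (root_conjE _ sa) eqxx mulr1 (inj_eq (@widen_ord_inj _ _ nk)) in ab *.
rewrite (negPf ab) add0r; apply: contraNneq sab => x0.
by rewrite sa x0 scale0r addr0.
Qed.

End RootBasis.

Unset Implicit Arguments.

Theorem lemma4p3 (F : fieldType) (n k d : nat)
  (s : 'I_k -> 'M[F]_n) (alpha : 'I_k -> 'rV[F]_n)
  (HF : [pchar F] =i pred0)
  (Hunit : forall i, s i \in unitmx)
  (Hrefl : forall i, is_reflection (s i))
  (Halpha : forall i, is_reflection_vector (s i) (alpha i))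
  (Hirr : irreducible_rep s)
  (Hnk : (n <= k)%N)
  (Hconn : weakly_connected s alpha [set i : 'I_k | (i < n)%N])
  (Hbasis : forall c : 'I_k -> F,
      \sum_(i : 'I_k | (i < n)%N) c i *: alpha i = 0 ->
      forall i : 'I_k, (i < n)%N -> c i = 0)
  (Hd : (d <= n)%N)
  (phi : {linear ext F n d -> ext F n d})
  (Hphi : forall A, in_rhoW s A -> forall x, phi (ext_act A x) = ext_act A (phi x)) :
  exists gamma : {set 'I_k} -> F,
    (forall J : {set 'I_k}, J \subset [set i : 'I_k | (i < n)%N] -> #|J| = d ->
       phi (wedge_set d alpha J) = gamma J *: wedge_set d alpha J) /\
    (forall J J' : {set 'I_k},
       J \subset [set i : 'I_k | (i < n)%N] -> #|J| = d ->
       J' \subset [set i : 'I_k | (i < n)%N] ->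
       move s alpha [set i : 'I_k | (i < n)%N] J J' -> gamma J = gamma J').
Proof.
pose wk := widen_ord Hnk; set M := root_mx Hnk alpha; set r := root_conj Hnk s alpha.
have Mu : M \in unitmx := root_mx_unit Hnk Hbasis.
have r_col := root_conj_col Hnk Hbasis Hrefl Halpha.
have r_diag := root_conj_diag Hnk Hbasis Hrefl Halpha.
pose phi' : {linear ext F n d -> ext F n d} := ext_act (invmx M) \o phi \o ext_act M.
have phi'_comm m x : phi' (ext_act (r m) x) = ext_act (r m) (phi' x).
  rewrite /= ext_act_conj // Hphi ?ext_act_conj_invmx //.
  by exists [:: (wk m, true)]; rewrite big_seq1.
(* [gamma] is 0 on sets that are not the image of a subset of ['I_n]. *)
pose gamma (J : {set 'I_k}) : F := oapp (basis_eigenvalue phi') 0 (insub (wk @^-1: J)).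
have gammaE (S : dsub n d) : gamma (wk @: val S) = basis_eigenvalue phi' S.
  by rewrite /gamma widen_imsetK valK.
exists gamma; split.
  move=> J JI cJ; have [S ->] := dsub_of_widen Hnk JI cJ.
  rewrite gammaE wedge_set_widen -[phi _](ext_act_invmxK _ Mu).
  rewrite -[ext_act (invmx M) _]/(phi' (ext_basis S)).
  by rewrite (phi_basis r_col r_diag phi'_comm) linearZ.
move=> J J' JI cJ J'I [i [j [iJ jJ' JJ' _ arr]]].
have [S JS] := dsub_of_widen Hnk JI cJ.
have [S' J'S'] := dsub_of_widen Hnk J'I (etrans (card_exchange iJ jJ' JJ') cJ).
rewrite {}JS {}J'S' in iJ jJ' JJ' *; rewrite !gammaE.
have [a [b [ia jb aS bS' SS']]] := widen_exchange iJ jJ' JJ'.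
rewrite {}ia {}jb in arr.
case/orP: arr => /(root_conj_arrow Hbasis Hrefl Halpha) arr.
  exact: (basis_eigenvalue_exchange r_col r_diag phi'_comm aS bS' SS' arr).
exact: esym (basis_eigenvalue_exchange r_col r_diag phi'_comm bS' aS (esym SS') arr).
Qed.
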